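(* Fix $\kappa\ge 2$ and a finite taxon set $X$. Let $\psi^+$ be a rooted binary topological tree on $X$. Then for generic $P\in \mathrm{UE}_\kappa(\psi^+)$, one has $P\notin \mathrm{UE}_\kappa(\phi^+)$ for every rooted binary topological tree $\phi^+\neq\psi^+$ on $X$; that is, $\psi^+$ is identifiable from a generic distribution in the UE model. More precisely, for each $\phi^+\ne\psi^+$, $\mathrm{UE}_\kappa(\psi^+)\cap \mathrm{UE}_\kappa(\phi^+)$ has Lebesgue measure zero within $\mathrm{UE}_\kappa(\psi^+)$ (measure taken with respect to the dimension of $\mathrm{UE}_\kappa(\psi^+)$).
   Context: A $\kappa$-state site pattern probability tensor on a finite taxon set $X$ is an $|X|$-way $\kappa\times\cdots\times\kappa$ real array $P$, with one index for each taxon, whose entries are non-negative and sum to 1; $p_{i_1\dots i_n}$ is the probability that the taxa are in states $(i_1,\dots,i_n)$. For $Y\subseteq X$, $P_Y$ denotes the marginalization of $P$ to the taxa in $Y$ (summing over the indices of taxa not in $Y$). For a rooted tree $\psi^+$ on $X$ and $Y\subseteq X$, $\psi^+|_Y$ is the induced rooted subtree on $Y$. A 2-clade (cherry) of a rooted tree is a pair of leaves $\{a,b\}$ that are exactly the leaf descendants of some vertex. The $\kappa$-state ultrametric exchangeable model $\mathrm{UE}_\kappa(\psi^+)$ of a rooted binary topological tree $\psi^+$ on $X$ is the set of all $\kappa$-state site pattern probability tensors $P$ on $X$ such that for every $Y\subseteq X$ and every 2-clade $\{a,b\}$ of $\psi^+|_Y$, $P_Y$ is invariant under exchanging the indices corresponding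 to $a$ and $b$. It is the intersection of an affine linear space with the probability simplex. *)

From HB Require Import structures.
From mathcomp Require Import all_boot all_order all_algebra.
From mathcomp Require Import reals.
Set Implicit Arguments. Unset Strict Implicit. Unset Printing Implicit Defensive.
Import Order.TTheory GRing.Theory Num.Theory.
Local Open Scope ring_scope.

(* A rooted leaf-labelled topological tree on X is represented by its set of *)
(* clusters (clades): the sets of leaf descendants of its vertices.          *)
Definition compatible (X : finType) (A B : {set X}) : bool :=
  [|| A \subset B, B \subset A | [disjoint A & B]].

Definition is_rooted_binary_tree (X : finType) (H : {set {set X}}) : Prop :=
  [/\ [set: X] \in H,
      (forall x : X, [set x] \in H),
      (forall C, C \in H -> C != set0),
      (forall A B, A \in H -> B \in H -> compatible A B) &
      (* every vertex with >= 2 leaf descendants has exactly two children *)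
      (forall C, C \in H -> (2 <= #|C|)%N ->
        exists A B, [/\ A \in H, B \in H, [disjoint A & B] & A :|: B = C])].

(* clusters of the induced rooted subtree psi|_Y *)
Definition restrict_tree (X : finType) (H : {set {set X}}) (Y : {set X})
  : {set {set X}} := [set C :&: Y | C in H & C :&: Y != set0].

Definition is_2clade (X : finType) (H : {set {set X}}) (Y : {set X}) (a b : X)
  : Prop := a != b /\ [set a; b] \in restrict_tree H Y.

Definition tensor (R : realType) (X : finType) (k : nat) :=
  {ffun {ffun X -> 'I_k} -> R}.

Definition is_prob_tensor (R : realType) (X : finType) (k : nat)
  (P : tensor R X k) : Prop :=
  (forall s, 0 <= P s) /\ \sum_s P s = 1.

(* marginal P_Y, evaluated at a pattern s (depends only on s restricted to Y) *)
Definition marginal (R : realType) (X : finType) (k : nat)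
  (P : tensor R X k) (Y : {set X}) (s : {ffun X -> 'I_k}) : R :=
  \sum_(t : {ffun X -> 'I_k} | [forall y in Y, t y == s y]) P t.

Definition swap_pattern (X : finType) (k : nat) (a b : X)
  (s : {ffun X -> 'I_k}) : {ffun X -> 'I_k} :=
  [ffun x => if x == a then s b else if x == b then s a else s x].

Definition UE (R : realType) (X : finType) (k : nat) (H : {set {set X}})
  (P : tensor R X k) : Prop :=
  is_prob_tensor P /\
  forall (Y : {set X}) (a b : X), is_2clade H Y a b ->
    forall s, marginal P Y (swap_pattern a b s) = marginal P Y s.

Definition in_box (R : realType) (d : nat) (a b v : 'rV[R]_d) : Prop :=
  forall i, a 0 i <= v 0 i <= b 0 i.

Definition box_vol (R : realType) (d : nat) (a b : 'rV[R]_d) : R :=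
  \prod_(i < d) (b 0 i - a 0 i).

Definition lebesgue_null (R : realType) (d : nat) (A : 'rV[R]_d -> Prop)
  : Prop :=
  forall eps : R, 0 < eps -> exists a b : nat -> 'rV[R]_d,
    [/\ (forall n i, a n 0 i <= b n 0 i),
        (forall v, A v -> exists n, in_box (a n) (b n) v) &
        (forall N, \sum_(n < N) box_vol (a n) (b n) <= eps)].

Definition affine_map (R : realType) (X : finType) (k d : nat)
  (c : tensor R X k) (e : 'I_d -> tensor R X k) (v : 'rV[R]_d)
  : tensor R X k :=
  [ffun s => c s + \sum_(i < d) v 0 i * e i s].

From HB Require Import structures.
From mathcomp Require Import all_boot all_order all_algebra.
From mathcomp Require Import reals ring lra.
Import Order.TTheory GRing.Theory Num.Theory.
Local Open Scope ring_scope.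
Set Implicit Arguments. Unset Strict Implicit. Unset Printing Implicit Defensive.

(* Fix psi <> phi.  Parametrize (an affine space containing) UE(psi) injectively
   by v |-> c + sum_i v_i e_i.  The proof exhibits ONE linear invariant that
   vanishes on UE(phi) but not identically on UE(psi):
   - since psi <> phi are both binary, some cluster D of psi is not a cluster
     of phi, and then there are x, z in D and y outside D such that {y, z} is
     a cherry of phi restricted to {x, y, z};
   - the "block tensor" of D (uniform on 0/1 patterns constant on D) lies in
     UE(psi) but its {x,y,z}-marginal is not invariant under swapping y, z,
     while the uniform tensor lies in every UE model.
   The swap defect g(v) of the {x,y,z}-marginal is therefore a non-constant
   affine function of v vanishing on the preimage of UE(psi) /\ UE(phi).
   Finally that preimage is bounded (probability tensors are, and the
   parametrization is injective), and a bounded subset of an affine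
   hyperplane of R^d is covered by boxes of arbitrarily small total volume. *)

Definition agree (X : finType) (k : nat) (Y : {set X}) (t s : {ffun X -> 'I_k}) :=
  [forall y in Y, t y == s y].

Lemma marginal_reindex (R : realType) (X : finType) (k : nat) (P : tensor R X k)
    (Y : {set X}) (s1 s2 : {ffun X -> 'I_k})
    (sg : {ffun X -> 'I_k} -> {ffun X -> 'I_k}) :
  involutive sg -> (forall t, P (sg t) = P t) ->
  (forall t, agree Y t s2 = agree Y (sg t) s1) ->
  marginal P Y s2 = marginal P Y s1.
Proof.
move=> inv hP hag; rewrite /marginal (reindex_inj (inv_inj inv)) /=.
apply: eq_big => t; last by move=> _; rewrite hP.
by have := hag (sg t); rewrite inv /agree => ->.
Qed.

Lemma swap_patternK (X : finType) (k : nat) (a b : X) :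
  involutive (@swap_pattern X k a b).
Proof.
move=> s; apply/ffunP => x; rewrite !ffunE.
case: (eqVneq x a) => [->|xa]; rewrite ?eqxx; first by case: (eqVneq a b) => [->|].
by case: (eqVneq x b) => [->|xb]; rewrite ?eqxx.
Qed.

Lemma swap_patternC (X : finType) (k : nat) (a b : X) (s : {ffun X -> 'I_k}) :
  swap_pattern a b s = swap_pattern b a s.
Proof.
apply/ffunP => w; rewrite !ffunE.
by case: (eqVneq w a) => [->|wa]; case: (eqVneq a b) => [->|ab].
Qed.

Lemma agree_swap (X : finType) (k : nat) (Y : {set X}) (a b : X)
    (t s : {ffun X -> 'I_k}) :
  a \in Y -> b \in Y ->
  agree Y t (swap_pattern a b s) -> agree Y (swap_pattern a b t) s.
Proof.
move=> aY bY /forallP h; apply/forallP => w; apply/implyP => wY.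
move: (implyP (h a) aY) (implyP (h b) bY) (implyP (h w) wY); rewrite !ffunE eqxx.
case: (eqVneq w a) => [->|wa].
  by case: (eqVneq b a) => [->|ba]; rewrite ?eqxx // => _ /eqP ->.
by case: (eqVneq w b) => [->|wb].
Qed.

Lemma marginal_swap_sym (R : realType) (X : finType) (k : nat)
    (P : tensor R X k) (Y : {set X}) (a b : X) (s : {ffun X -> 'I_k}) :
  a \in Y -> b \in Y -> (forall t, P (swap_pattern a b t) = P t) ->
  marginal P Y (swap_pattern a b s) = marginal P Y s.
Proof.
move=> aY bY hP; apply: (marginal_reindex (swap_patternK a b)) => // t.
apply/idP/idP; first exact: agree_swap.
by move=> h; rewrite -[t](swap_patternK a b) agree_swap // swap_patternK.
Qed.

Definition block_pattern (X : finType) (k : nat) (D : {set X})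
    (t : {ffun X -> 'I_k}) : bool :=
  [forall w, (t w <= 1)%N] && [forall w in D, forall w' in D, t w == t w'].

(* The block tensor of D: the uniform distribution on block patterns.  It is
   the distribution of a two-state model in which D evolves as one unit. *)
Definition block_tensor (R : realType) (X : finType) (k : nat) (D : {set X})
    : tensor R X k :=
  [ffun t => (block_pattern D t)%:R
             / (#|[set t : {ffun X -> 'I_k} | block_pattern D t]|)%:R].

(* There is at least one block pattern (the constant 0), so the block tensor
   is a probability tensor. *)
Lemma block_tensor_prob (R : realType) (X : finType) (k : nat) (D : {set X}) :
  (0 < k)%N -> is_prob_tensor (block_tensor R k D).
Proof.
move=> k0; split; first by move=> t; rewrite ffunE divr_ge0 ?ler0n.
set N := #|[set t : {ffun X -> 'I_k} | block_pattern D t]|.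
have N0 : (0 < N)%N.
  apply/card_gt0P; exists [ffun _ => Ordinal k0]; rewrite inE; apply/andP; split.
    by apply/forallP => w; rewrite ffunE.
  by apply/forall_inP => w _; apply/forall_inP => w' _; rewrite !ffunE.
have sumN : \sum_(t : {ffun X -> 'I_k}) ((block_pattern D t)%:R : R) = N%:R.
  rewrite /N -sum1_card natr_sum [RHS]big_mkcond /=; apply: eq_bigr => t _.
  by rewrite inE; case: (block_pattern D t).
under eq_bigr do rewrite ffunE.
by rewrite -mulr_suml sumN divff // pnatr_eq0 -lt0n.
Qed.

Lemma block_tensor_inv (R : realType) (X : finType) (k : nat) (D : {set X})
    (sg : {ffun X -> 'I_k} -> {ffun X -> 'I_k}) :
  involutive sg -> (forall t, block_pattern D t -> block_pattern D (sg t)) ->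
  forall t, block_tensor R k D (sg t) = block_tensor R k D t.
Proof.
move=> inv h t; rewrite !ffunE.
suff -> : block_pattern D (sg t) = block_pattern D t by [].
by apply/idP/idP => [/h|/h //]; rewrite inv.
Qed.

Lemma block_pattern_swap (X : finType) (k : nat) (D : {set X}) (a b : X)
    (t : {ffun X -> 'I_k}) :
  (a \in D) = (b \in D) -> block_pattern D t -> block_pattern D (swap_pattern a b t).
Proof.
move=> hab /andP [/forallP h1 /forall_inP h2]; apply/andP; split.
  by apply/forallP => w; rewrite ffunE; do ![case: ifP => _]; apply: h1.
pose pi w := if w == a then b else if w == b then a else w.
have piD w : w \in D -> pi w \in D.
  rewrite /pi; case: (eqVneq w a) => [->|wa]; first by rewrite hab.
  by case: (eqVneq w b) => [->|wb] //; rewrite hab.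
have swap_pi w : swap_pattern a b t w = t (pi w).
  by rewrite ffunE /pi; do ![case: ifP => _].
apply/forall_inP => w wD; apply/forall_inP => w' w'D.
by rewrite !swap_pi; apply: (forall_inP (h2 _ (piD w wD))); apply: piD.
Qed.

(* This involution maps block patterns to block
   patterns and realizes the a <-> b exchange on any Y meeting D only in a. *)
Definition block_swap (X : finType) (k : nat) (D : {set X}) (a b : X)
    (t : {ffun X -> 'I_k}) : {ffun X -> 'I_k} :=
  [ffun w => if w == b then t a else if w \in D then
     (if t w == t a then t b else if t w == t b then t a else t w) else t w].

Lemma block_swapK (X : finType) (k : nat) (D : {set X}) (a b : X) :
  a \in D -> b \notin D -> involutive (@block_swap X k D a b).
Proof.
move=> aD bD t; apply/ffunP => w.
have ab : a != b by apply: contraNneq bD => <-.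
rewrite !ffunE eqxx (negPf ab) aD eqxx.
case: (eqVneq w b) => [->|wb] //; case: (boolP (w \in D)) => wD //.
case: (eqVneq (t w) (t a)) => [->|twa]; first by rewrite eqxx; case: (eqVneq (t a) (t b)).
case: (eqVneq (t w) (t b)) => [->|twb].
  by rewrite eqxx; case: (eqVneq (t a) (t b)) => [->|].
by rewrite (negPf twa) (negPf twb).
Qed.

Lemma block_pattern_block_swap (X : finType) (k : nat) (D : {set X}) (a b : X)
    (t : {ffun X -> 'I_k}) :
  b \notin D -> block_pattern D t -> block_pattern D (block_swap D a b t).
Proof.
move=> bD /andP [/forallP h1 /forall_inP h2]; apply/andP; split.
  by apply/forallP => w; rewrite ffunE; do ![case: ifP => _]; apply: h1.
have notb w : w \in D -> (w == b) = false.
  by move=> wD; apply/negbTE; apply: contraNneq bD => <-.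
apply/forall_inP => w wD; apply/forall_inP => w' w'D.
by rewrite !ffunE !notb // wD w'D (eqP (forall_inP (h2 w wD) w' w'D)).
Qed.

Lemma agree_block_swap (X : finType) (k : nat) (D Y : {set X}) (a b : X)
    (t s : {ffun X -> 'I_k}) :
  a \in Y -> b \in Y -> a \in D -> b \notin D ->
  (forall w, w \in Y -> w \in D -> w = a) ->
  agree Y t (swap_pattern a b s) -> agree Y (block_swap D a b t) s.
Proof.
move=> aY bY aD bD hY /forallP h; apply/forallP => w; apply/implyP => wY.
have ab : a != b by apply: contraNneq bD => <-.
move: (implyP (h a) aY) (implyP (h b) bY) (implyP (h w) wY).
rewrite !ffunE eqxx [b == a]eq_sym (negPf ab) eqxx.
case: (eqVneq w b) => [->|wb]; first by move=> ->.
case: (boolP (w \in D)) => wD; first by rewrite (hY w wY wD) !eqxx.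
have wa : w != a by apply: contraNneq wD => ->.
by rewrite (negPf wa).
Qed.

(* The block tensor of a cluster D of psi lies in UE(psi): in every cherry
   {a, b} of a restriction of psi, either a, b lie on the same side of D, or
   D meets the restriction only in one of them. *)
Lemma block_tensor_UE (R : realType) (X : finType) (k : nat)
    (psi : {set {set X}}) (D : {set X}) :
  (0 < k)%N -> (forall A B, A \in psi -> B \in psi -> compatible A B) ->
  D \in psi -> UE psi (block_tensor R k D).
Proof.
move=> k0 hc DH; split; first exact: block_tensor_prob.
move=> Y a b [ab /imsetP [E]]; rewrite inE => /andP [EH _] hab s.
have /setIP [aE aY] : a \in E :&: Y by rewrite -hab !inE eqxx.
have /setIP [bE bY] : b \in E :&: Y by rewrite -hab !inE eqxx orbT.
have DE x y : x \in D -> x \in E -> y \in E -> y \notin D -> D \subset E.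
  move=> xD xE yE yD; case/or3P: (hc E D EH DH) => // h.
    by rewrite (subsetP h y yE) in yD.
  by rewrite (disjointFr h xE) in xD.
have inYD w : w \in Y -> w \in D -> D \subset E -> (w == a) || (w == b).
  move=> wY wD hDE; have : w \in E :&: Y by rewrite inE (subsetP hDE w wD) wY.
  by rewrite -hab !inE.
have sym_same : (a \in D) = (b \in D) ->
    marginal (block_tensor R k D) Y (swap_pattern a b s)
    = marginal (block_tensor R k D) Y s.
  move=> same; apply: marginal_swap_sym => //.
  by apply: block_tensor_inv => [|t]; [exact: swap_patternK | exact: block_pattern_swap].
have sym_split a' b' : a' \in Y -> b' \in Y -> a' \in D -> b' \notin D ->
    (forall w, w \in Y -> w \in D -> w = a') ->
    marginal (block_tensor R k D) Y (swap_pattern a' b' s)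
    = marginal (block_tensor R k D) Y s.
  move=> a'Y b'Y a'D b'D only.
  apply: (marginal_reindex (block_swapK a'D b'D)).
    by apply: block_tensor_inv => [|t]; [exact: block_swapK | exact: block_pattern_block_swap].
  move=> t; apply/idP/idP; first exact: agree_block_swap.
  move=> h; rewrite -[t](block_swapK a'D b'D); apply: agree_block_swap => //.
  by rewrite swap_patternK.
case: (boolP (a \in D)) => aD; case: (boolP (b \in D)) => bD.
- by apply: sym_same; rewrite aD bD.
- apply: sym_split => // w wY wD.
  by case/orP: (inYD w wY wD (DE a b aD aE bE bD)) => /eqP // wb; rewrite wb (negPf bD) in wD.
- rewrite swap_patternC; apply: sym_split => // w wY wD.
  by case/orP: (inYD w wY wD (DE b a bD bE aE aD)) => /eqP // wa; rewrite wa (negPf aD) in wD.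
- by apply: sym_same; rewrite (negPf aD) (negPf bD).
Qed.

(* For x, z in D, y outside D and k >= 2, the {x,y,z}-marginal of the block
   tensor is not invariant under swapping y and z: the pattern (x,y,z) =
   (0,1,0) has positive probability while (0,0,1) has none. *)
Lemma block_tensor_asym (R : realType) (X : finType) (k : nat) (D : {set X})
    (x y z : X) :
  (1 < k)%N -> x \in D -> z \in D -> y \notin D -> x != z ->
  exists s, marginal (block_tensor R k D) [set x; y; z] (swap_pattern y z s)
            != marginal (block_tensor R k D) [set x; y; z] s.
Proof.
move=> hk xD zD yD xz; have k0 : (0 < k)%N by apply: ltnW.
pose s : {ffun X -> 'I_k} := [ffun w => if w == y then Ordinal hk else Ordinal k0].
exists s.
have xy : x != y by apply: contraNneq yD => <-.
have zy : z != y by apply: contraNneq yD => <-.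
have swapped0 : marginal (block_tensor R k D) [set x; y; z] (swap_pattern y z s) = 0.
  apply: big1 => t /forallP ht; rewrite ffunE.
  have xY : x \in [set x; y; z] by rewrite !inE eqxx.
  have zY : z \in [set x; y; z] by rewrite !inE eqxx !orbT.
  have := implyP (ht x) xY; have := implyP (ht z) zY.
  rewrite !ffunE (negPf xy) (negPf zy) eqxx (negPf xz) eqxx => /eqP tz /eqP tx.
  suff -> : block_pattern D t = false by rewrite mul0r.
  apply/negbTE/negP => /andP [_ /forall_inP h].
  by move: (forall_inP (h x xD) z zD); rewrite tx tz.
have bs : block_pattern D s.
  apply/andP; split; first by apply/forallP => w; rewrite ffunE; case: ifP.
  apply/forall_inP => w wD; apply/forall_inP => w' w'D; rewrite !ffunE.
  by rewrite !ifF //; apply/negbTE; apply: contraNneq yD => <-.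
have pos : 0 < marginal (block_tensor R k D) [set x; y; z] s.
  rewrite /marginal (bigD1 s) /=; last by apply/forallP => w; apply/implyP.
  apply: ltr_wpDr; first by apply: sumr_ge0 => t _; rewrite ffunE divr_ge0 ?ler0n.
  rewrite ffunE bs mul1r invr_gt0 ltr0n.
  by apply/card_gt0P; exists s; rewrite inE.
by rewrite swapped0 eq_sym gt_eqF.
Qed.

Lemma min_cluster_above (X : finType) (H : {set {set X}}) (C : {set X}) :
  [set: X] \in H ->
  exists F, [/\ F \in H, C \subset F &
    forall G, G \in H -> C \subset G -> (#|F| <= #|G|)%N].
Proof.
move=> hT; pose P := [pred F : {set X} | (F \in H) && (C \subset F)].
have PT : P [set: X] by rewrite /P /= hT subsetT.
case: (@arg_minnP _ _ P (fun F : {set X} => #|F|) PT) => F /andP [FH CF] hmin.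
by exists F; split => // G GH CG; apply: hmin; rewrite /P /= GH CG.
Qed.

(* If the minimal cluster F above a nonempty C is not C itself, C meets both
   children of F (otherwise a smaller cluster would contain C). *)
Lemma split_min_cluster (X : finType) (H : {set {set X}}) (C F : {set X}) :
  is_rooted_binary_tree H -> F \in H -> C \subset F -> C != F -> C != set0 ->
  (forall G, G \in H -> C \subset G -> (#|F| <= #|G|)%N) ->
  exists A B, [/\ A \in H, B \in H, [disjoint A & B], A :|: B = F &
     ~~ (C \subset A) /\ ~~ (C \subset B)].
Proof.
move=> [_ _ hN _ hb] FH CF CnF Cn0 hmin.
have F2 : (2 <= #|F|)%N.
  have /proper_card ltCF : C \proper F by rewrite properEneq CnF CF.
  by apply: leq_ltn_trans ltCF; rewrite card_gt0.
have [A [B [AH BH dAB hAB]]] := hb F FH F2.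
have child_lt A' B' : A' \in H -> B' \in H -> [disjoint A' & B'] ->
    A' :|: B' = F -> (#|A'| < #|F|)%N.
  move=> A'H B'H dA'B' hA'B'; apply: proper_card.
  rewrite properEneq -hA'B' subsetUl andbT.
  have [b bB] := set0Pn _ (hN B' B'H).
  by apply: contraFneq (disjointFl dA'B' bB) => ->; rewrite inE bB orbT.
have ltA := child_lt A B AH BH dAB hAB.
have ltB : (#|B| < #|F|)%N.
  by apply: child_lt AH _ _; rewrite 1?disjoint_sym 1?setUC.
exists A, B; split => //; split.
  by apply/negP => CA; have := hmin A AH CA; rewrite leqNgt ltA.
by apply/negP => CB; have := hmin B BH CB; rewrite leqNgt ltB.
Qed.

(* A cluster C of phi not in
   psi would have to contain both children of the minimal psi-cluster above it,
   hence equal that cluster. *)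
Lemma binary_tree_maximal (X : finType) (psi phi : {set {set X}}) :
  is_rooted_binary_tree psi -> is_rooted_binary_tree phi ->
  psi \subset phi -> phi \subset psi.
Proof.
move=> hpsi hphi sub; apply/subsetP => C Cphi; apply/negPn/negP => Cpsi.
have [hT _ _ _ _] := hpsi; have [_ _ hN' hc' _] := hphi.
have [F [FH CF hmin]] := min_cluster_above C hT.
have CnF : C != F by apply: contraNneq Cpsi => ->.
have [A [B [AH BH dAB hAB [nCA nCB]]]] :=
  split_min_cluster hpsi FH CF CnF (hN' C Cphi) hmin.
have child_sub A' B' : A' \in psi -> A' :|: B' = F -> ~~ (C \subset A') ->
    ~~ (C \subset B') -> A' \subset C.
  move=> A'H hA'B' nCA' nCB'.
  case/or3P: (hc' C A' Cphi (subsetP sub A' A'H)) => // h; first by rewrite h in nCA'.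
  apply: contraNT nCB' => _; apply/subsetP => c cC.
  by move: (subsetP CF c cC); rewrite -hA'B' inE (disjointFr h cC).
have AC := child_sub A B AH hAB nCA nCB.
have BC := child_sub B A BH (etrans (setUC B A) hAB) nCB nCA.
by move: CnF; rewrite eqEsubset CF -hAB subUset AC BC.
Qed.

Lemma distinguishing_cluster (X : finType) (psi phi : {set {set X}}) :
  is_rooted_binary_tree psi -> is_rooted_binary_tree phi -> phi != psi ->
  exists D, D \in psi /\ D \notin phi.
Proof.
move=> hpsi hphi ne; case: (boolP (psi \subset phi)) => sub.
  by move: ne; rewrite eqEsubset sub (binary_tree_maximal hpsi hphi sub).
by case/subsetPn: sub => D DH Dn; exists D.
Qed.

(* If D meets both sides of a split A | B of a cluster and y \in B lies outside
   D, then picking x \in D \ B (so x \in A) and z \in D \ A (so z \in B), the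
   pair {y, z} is a cherry of the restriction of phi to {x, y, z}. *)
Lemma cherry_across_split (X : finType) (phi : {set {set X}}) (D A B : {set X})
    (y : X) :
  A \in phi -> B \in phi -> [disjoint A & B] -> D \subset A :|: B ->
  y \in B -> y \notin D -> ~~ (D \subset A) -> ~~ (D \subset B) ->
  exists x z, [/\ x \in D, z \in D, x != z & is_2clade phi [set x; y; z] y z].
Proof.
move=> AH BH dAB DAB yB yD nDA nDB.
case/subsetPn: nDB => x xD xB; case/subsetPn: nDA => z zD zA.
have zB : z \in B by move: (subsetP DAB z zD); rewrite inE (negPf zA).
have xz : x != z by apply: contraNneq zA => <-; move: (subsetP DAB x xD); rewrite inE (negPf xB) orbF.
exists x, z; split => //; split; first by apply: contraNneq yD => ->.
have cherry : [set y; z] = B :&: [set x; y; z].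
  apply/setP => w; rewrite !inE.
  case: (eqVneq w x) => [->|wx].
    rewrite (negPf xB) /=; apply/negbTE; rewrite negb_or (negPf xz) andbT.
    by apply: contraNneq yD => <-.
  by case: (eqVneq w y) => [->|wy]; [rewrite yB | case: (eqVneq w z) => [->|]; rewrite ?zB ?andbF].
apply/imsetP; exists B => //; rewrite inE BH /= -cherry.
by apply/set0Pn; exists y; rewrite !inE eqxx.
Qed.

(* Take the minimal phi-cluster F above D, split it
   into its children, and take y \in F \ D. *)
Lemma distinguishing_triple (X : finType) (psi phi : {set {set X}}) (D : {set X}) :
  is_rooted_binary_tree psi -> is_rooted_binary_tree phi ->
  D \in psi -> D \notin phi ->
  exists x y z, [/\ x \in D, z \in D, y \notin D, x != z &
                 is_2clade phi [set x; y; z] y z].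
Proof.
move=> [_ _ hN _ _] hphi DH Dn; have [hT _ _ _ _] := hphi.
have [F [FH DF hmin]] := min_cluster_above D hT.
have DnF : D != F by apply: contraNneq Dn => ->.
have [A [B [AH BH dAB hAB [nDA nDB]]]] :=
  split_min_cluster hphi FH DF DnF (hN D DH) hmin.
have [y yF yD] : exists2 y, y \in F & y \notin D.
  by apply/subsetPn; apply: contra DnF => FD; rewrite eqEsubset DF FD.
have DAB : D \subset A :|: B by rewrite hAB.
move: yF; rewrite -hAB inE => /orP [yA|yB].
  have dBA : [disjoint B & A] by rewrite disjoint_sym.
  have DBA : D \subset B :|: A by rewrite setUC.
  have [x [z [? ? ? ?]]] := cherry_across_split BH AH dBA DBA yA yD nDB nDA.
  by exists x, y, z.
have [x [z [? ? ? ?]]] := cherry_across_split AH BH dAB DAB yB yD nDA nDB.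
by exists x, y, z.
Qed.

Lemma cherry_mem (X : finType) (H : {set {set X}}) (Y : {set X}) (a b : X) :
  is_2clade H Y a b -> a \in Y /\ b \in Y.
Proof.
move=> [_ /imsetP [E _ hab]].
have /setIP [_ aY] : a \in E :&: Y by rewrite -hab !inE eqxx.
have /setIP [_ bY] : b \in E :&: Y by rewrite -hab !inE eqxx orbT.
by split.
Qed.

Definition uniform_tensor (R : realType) (X : finType) (k : nat) : tensor R X k :=
  [ffun _ => (#|{ffun X -> 'I_k}|%:R)^-1].

Lemma uniform_tensor_UE (R : realType) (X : finType) (k : nat) (H : {set {set X}}) :
  (0 < k)%N -> UE H (uniform_tensor R X k).
Proof.
move=> k0; split.
  split; first by move=> t; rewrite ffunE invr_ge0 ler0n.
  under eq_bigr do rewrite ffunE.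
  rewrite sumr_const -[LHS]mulr_natr mulVf // pnatr_eq0 -lt0n.
  by apply/card_gt0P; exists [ffun _ => Ordinal k0].
move=> Y a b /cherry_mem [aY bY] s.
by apply: marginal_swap_sym => // t; rewrite !ffunE.
Qed.

Definition swap_defect (R : realType) (X : finType) (k : nat) (P : tensor R X k)
    (Y : {set X}) (a b : X) (s : {ffun X -> 'I_k}) : R :=
  marginal P Y (swap_pattern a b s) - marginal P Y s.

Lemma swap_defect_UE (R : realType) (X : finType) (k : nat) (H : {set {set X}})
    (P : tensor R X k) (Y : {set X}) (a b : X) (s : {ffun X -> 'I_k}) :
  UE H P -> is_2clade H Y a b -> swap_defect P Y a b s = 0.
Proof. by move=> [_ hsym] hab; rewrite /swap_defect hsym // subrr. Qed.

(* Marginals, hence swap defects, are linear in the tensor, so the swap defect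
   is an affine function of the parameter v. *)
Lemma swap_defect_affine (R : realType) (X : finType) (k d : nat)
    (c : tensor R X k) (e : 'I_d -> tensor R X k) (v : 'rV[R]_d)
    (Y : {set X}) (a b : X) (s : {ffun X -> 'I_k}) :
  swap_defect (affine_map c e v) Y a b s
  = swap_defect c Y a b s + \sum_(i < d) v 0 i * swap_defect (e i) Y a b s.
Proof.
have marginal_affine t : marginal (affine_map c e v) Y t
    = marginal c Y t + \sum_(i < d) v 0 i * marginal (e i) Y t.
  rewrite /marginal; under eq_bigr do rewrite ffunE.
  rewrite big_split /= exchange_big /=; congr (_ + _).
  by apply: eq_bigr => i _; rewrite mulr_sumr.
rewrite /swap_defect !marginal_affine; under [X in _ = _ + X]eq_bigr do rewrite mulrBr.
rewrite sumrB; lra.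
Qed.

(* An injective affine parametrization has bounded coordinates on the
   preimage of the unit cube: a left inverse of the (row-free) matrix of the
   linear part bounds v in terms of the entries of affine_map c e v. *)
Lemma affine_preimage_bounded (R : realType) (X : finType) (k d : nat)
    (c : tensor R X k) (e : 'I_d -> tensor R X k) :
  injective (affine_map c e) ->
  exists C : R, 0 < C /\ forall v : 'rV[R]_d,
    (forall t, 0 <= affine_map c e v t <= 1) -> forall i, `|v 0 i| <= C.
Proof.
move=> inj.
pose E : 'M[R]_(d, #|{ffun X -> 'I_k}|) := \matrix_(i, j) e i (enum_val j).
have vE v j : (v *m E) 0 j = affine_map c e v (enum_val j) - c (enum_val j).
  rewrite !mxE ffunE addrC addKr.
  by apply: eq_bigr => i _; rewrite mxE.
have /row_freeP [B hB] : row_free E.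
  apply: inj_row_free => v hv; apply: inj; apply/ffunP => t.
  have := vE v (enum_rank t); rewrite hv mxE enum_rankK => /eqP.
  rewrite eq_sym subr_eq0 => /eqP ->.
  by rewrite !ffunE big1 ?addr0 // => i _; rewrite mxE mul0r.
pose Ci i : R := \sum_j (1 + `|c (enum_val j)|) * `|B j i|.
have Ci0 i : 0 <= Ci i by apply: sumr_ge0 => j _; rewrite mulr_ge0 ?addr_ge0.
exists (1 + \sum_i Ci i); split.
  by apply: ltr_wpDr; [apply: sumr_ge0 => i _ | apply: ltr01].
move=> v hv i; apply: (@le_trans _ _ (Ci i)).
  rewrite -[v]mulmx1 -hB mulmxA mxE.
  apply: (le_trans (ler_norm_sum _ _ _)); apply: ler_sum => j _.
  rewrite normrM ler_wpM2r // vE.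
  apply: (le_trans (ler_normB _ _)); apply: lerD => //.
  by have /andP [h0 h1] := hv (enum_val j); rewrite ger0_norm.
rewrite (bigD1 i) //= addrCA lerDl addr_ge0 //.
by apply: sumr_ge0 => i' _.
Qed.

Lemma prob_tensor_le1 (R : realType) (X : finType) (k : nat) (P : tensor R X k) t :
  is_prob_tensor P -> 0 <= P t <= 1.
Proof.
move=> [h0 h1]; rewrite h0 /= -h1 (bigD1 t) //= lerDl.
exact: sumr_ge0.
Qed.

Lemma sum_supported_le (R : numDomainType) (F : nat -> R) (n N : nat) :
  (forall m, 0 <= F m) -> (forall m, (n <= m)%N -> F m = 0) ->
  \sum_(m < N) F m <= \sum_(m < n) F m.
Proof.
move=> F0 Fn; rewrite -!(big_mkord xpredT).
case: (leqP N n) => hNn.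
  by rewrite (big_cat_nat (leq0n N) hNn) /= lerDl sumr_ge0.
rewrite (big_cat_nat (leq0n n) (ltnW hNn)) /= [X in _ + X]big1_seq ?addr0 //.
by move=> m /andP [_]; rewrite mem_index_iota => /andP [hm _]; apply: Fn.
Qed.

Lemma box_vol_ge0 (R : realType) (d : nat) (a b : 'rV[R]_d) :
  (forall i, a 0 i <= b 0 i) -> 0 <= box_vol a b.
Proof. by move=> ab; apply: prodr_ge0 => i _; rewrite subr_ge0. Qed.

(* A finite family of boxes covering A, of total volume at most eps, is
   turned into the sequence of boxes required by lebesgue_null, padding with
   degenerate boxes (this needs d > 0, witnessed by j). *)
Lemma finite_box_cover (R : realType) (d : nat) (A : 'rV[R]_d -> Prop)
    (j : 'I_d) (T : finType) (z0 : T) (a b : T -> 'rV[R]_d) (eps : R) :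
  (forall z i, a z 0 i <= b z 0 i) ->
  (forall v, A v -> exists z, in_box (a z) (b z) v) ->
  \sum_z box_vol (a z) (b z) <= eps ->
  exists aa bb : nat -> 'rV[R]_d,
    [/\ (forall n i, aa n 0 i <= bb n 0 i),
        (forall v, A v -> exists n, in_box (aa n) (bb n) v) &
        (forall N, \sum_(n < N) box_vol (aa n) (bb n) <= eps)].
Proof.
move=> ab cover small.
pose aa n := if (n < #|T|)%N then a (nth z0 (enum T) n) else 0.
pose bb n := if (n < #|T|)%N then b (nth z0 (enum T) n) else 0.
have vol_pad n : (#|T| <= n)%N -> box_vol (aa n) (bb n) = 0.
  move=> hn; rewrite /aa /bb ltnNge hn /box_vol (bigD1 j) //=.
  by rewrite !mxE subrr mul0r.
have aabb n i : aa n 0 i <= bb n 0 i.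
  by rewrite /aa /bb; case: ifP => _; rewrite ?ab ?mxE.
exists aa, bb; split => //.
  move=> v /cover [z hz]; exists (index z (enum T)).
  have zT : (index z (enum T) < #|T|)%N by rewrite cardE index_mem mem_enum.
  by rewrite /aa /bb zT nth_index ?mem_enum.
move=> N; apply: le_trans (sum_supported_le _ (fun n => box_vol_ge0 (aabb n)) vol_pad) _.
rewrite -(big_mkord xpredT (fun n => box_vol (aa n) (bb n))).
rewrite (eq_big_nat _ _ (F2 := fun n => box_vol (a (nth z0 (enum T) n))
                                                 (b (nth z0 (enum T) n)))); last first.
  by move=> n /andP [_ hn]; rewrite /aa /bb hn.
by rewrite cardE -(big_nth z0 xpredT (fun z => box_vol (a z) (b z))) big_enum.
Qed.

Lemma grid_cell (R : realType) (dl t : R) (M : nat) :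
  0 < dl -> (0 < M)%N -> 0 <= t -> t <= M%:R * dl ->
  exists m : 'I_M, m%:R * dl <= t <= (m%:R + 1) * dl.
Proof.
move=> dl0; elim: M => // M IH _ t0 tM.
case: (posnP M) => [M0|Mpos].
  by exists ord0; rewrite /= mul0r t0 add0r; move: tM; rewrite M0.
case: (leP t (M%:R * dl)) => htM.
  by have [m hm] := IH Mpos t0 htM; exists (widen_ord (leqnSn M) m).
by exists ord_max; rewrite /= (ltW htM) natr1.
Qed.

(* A bounded piece of the hyperplane al + sum_i v_i be_i = 0 (with be_j <> 0)
   inside the cube [-C, C]^d.  Cut the coordinates other than j into M cells
   of width 2C/M; above each cell the hyperplane stays within a slab of
   height 2K(2C/M) in coordinate j, where K = sum_i |be_i| / |be_j|.  The
   resulting boxes have total volume 2K (2C)^d / M, which tends to 0.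
   For a product index set, boxes are indexed by all z : 'I_d -> 'I_M, and
   those with z j <> 0 are flattened to volume 0 in coordinate j. *)
Section HyperplaneSlab.
Variables (R : realType) (d : nat) (C al : R) (be : 'I_d -> R) (j : 'I_d).
Hypotheses (C0 : 0 < C) (bj0 : be j != 0).

Let K : R := (\sum_i `|be i|) / `|be j|.
Let L : R := \prod_(i | i != j) (2 * C).

Definition cell_width (M : nat) : R := 2 * C / M%:R.
Definition slab_height (M : nat) : R := K * cell_width M.
Definition corner (M : nat) (z : {ffun 'I_d -> 'I_M}) (i : 'I_d) : R :=
  - C + (z i)%:R * cell_width M.
(* the j-coordinate of the hyperplane above the corner of the cell z *)
Definition slab_center (M : nat) (z : {ffun 'I_d -> 'I_M}) : R :=
  - (al + \sum_(i | i != j) corner z i * be i) / be j.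

Definition slab_lo (M : nat) (z : {ffun 'I_d -> 'I_M}) : 'rV[R]_d :=
  \row_i (if i == j then slab_center z - slab_height M else corner z i).
Definition slab_hi (M : nat) (z : {ffun 'I_d -> 'I_M}) : 'rV[R]_d :=
  \row_i (if i == j then
            (if z j == 0 :> nat then slab_center z + slab_height M
             else slab_center z - slab_height M)
          else corner z i + cell_width M).

(* side length of the box z in coordinate i, which depends on z i only *)
Definition slab_side (M : nat) (i : 'I_d) (m : 'I_M) : R :=
  if i == j then (if m == 0 :> nat then 2 * slab_height M else 0)
  else cell_width M.

Variable M : nat.
Hypothesis M0 : (0 < M)%N.

Lemma cell_width_gt0 : 0 < cell_width M.
Proof. by rewrite divr_gt0 ?mulr_gt0 ?ltr0n. Qed.

Lemma slab_height_ge0 : 0 <= slab_height M.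
Proof.
by apply: mulr_ge0; [rewrite divr_ge0 ?sumr_ge0 | apply/ltW/cell_width_gt0].
Qed.

Lemma slab_sideE (z : {ffun 'I_d -> 'I_M}) (i : 'I_d) :
  slab_hi z 0 i - slab_lo z 0 i = slab_side i (z i).
Proof.
rewrite /slab_side !mxE; case: (eqVneq i j) => [->|_]; last lra.
by case: ifP => _; lra.
Qed.

Lemma slab_side_ge0 (i : 'I_d) (m : 'I_M) : 0 <= slab_side i m.
Proof.
have := slab_height_ge0; have := cell_width_gt0.
by rewrite /slab_side; case: ifP => _; [case: ifP => _ | ]; lra.
Qed.

Lemma slab_lo_le_hi (z : {ffun 'I_d -> 'I_M}) (i : 'I_d) :
  slab_lo z 0 i <= slab_hi z 0 i.
Proof. by rewrite -subr_ge0 slab_sideE slab_side_ge0. Qed.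

Lemma slab_center_close (v : 'rV[R]_d) (z : {ffun 'I_d -> 'I_M}) :
  al + \sum_i v 0 i * be i = 0 ->
  (forall i, i != j -> `|v 0 i - corner z i| <= cell_width M) ->
  `|v 0 j - slab_center z| <= slab_height M.
Proof.
move=> hv near; rewrite (bigD1 j) //= in hv.
have bj : 0 < `|be j| by rewrite normr_gt0.
have center : be j * slab_center z = - (al + \sum_(i | i != j) corner z i * be i).
  by rewrite /slab_center; field.
have lin : be j * (v 0 j - slab_center z)
    = - \sum_(i | i != j) (v 0 i - corner z i) * be i.
  under eq_bigr do rewrite mulrBl.
  rewrite sumrB mulrBr center; lra.
rewrite -(ler_pM2l bj) -normrM lin normrN.
apply: (le_trans (ler_norm_sum _ _ _)).
apply: (@le_trans _ _ (\sum_(i | i != j) `|be i| * cell_width M)).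
  apply: ler_sum => i ij; rewrite normrM mulrC.
  by apply: ler_wpM2l => //; apply: near.
have -> : `|be j| * slab_height M = \sum_i `|be i| * cell_width M.
  by rewrite /slab_height /K -mulr_suml; field; rewrite normr_eq0.
rewrite [X in _ <= X](bigD1 j) //= lerDr.
by rewrite mulr_ge0 // ltW // cell_width_gt0.
Qed.

Lemma slab_cover (v : 'rV[R]_d) :
  (forall i, `|v 0 i| <= C) -> al + \sum_i v 0 i * be i = 0 ->
  exists z : {ffun 'I_d -> 'I_M}, in_box (slab_lo z) (slab_hi z) v.
Proof.
move=> bounded hv.
have cells i : exists m : 'I_M,
    m%:R * cell_width M <= v 0 i + C <= (m%:R + 1) * cell_width M.
  apply: grid_cell; rewrite ?cell_width_gt0 //; move: (bounded i).
    by rewrite ler_norml; lra.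
  rewrite /cell_width mulrC divfK ?pnatr_eq0 -?lt0n // ler_norml; lra.
have [f hf] := fin_all_exists cells.
pose z : {ffun 'I_d -> 'I_M} := [ffun i => if i == j then Ordinal M0 else f i].
have near i : i != j -> - C + (f i)%:R * cell_width M <= v 0 i
    <= - C + (f i)%:R * cell_width M + cell_width M.
  by move=> _; move: (hf i); rewrite mulrDl mul1r; lra.
exists z => i; rewrite !mxE /corner /z !ffunE.
case: (eqVneq i j) => [->|ij]; last exact: near.
rewrite eqxx /= -ler_distl.
apply: slab_center_close => // i' i'j; rewrite /corner ffunE (negPf i'j) ler_norml.
by move: (near i' i'j); lra.
Qed.

(* Total volume: the sum of products of sides factors as a product of sums,
   which is 2 * slab height in coordinate j and 2C in the others. *)
Lemma slab_volume :
  \sum_(z : {ffun 'I_d -> 'I_M}) box_vol (slab_lo z) (slab_hi z)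
  = 2 * K * (2 * C) * L / M%:R.
Proof.
under eq_bigr do rewrite /box_vol (eq_bigr _ (fun i _ => slab_sideE _ i)).
rewrite -bigA_distr_bigA (bigD1 j) //=.
have side_j : \sum_(m < M) slab_side j m = 2 * slab_height M.
  rewrite (bigD1 (Ordinal M0)) //= big1 => [|m hm]; first by rewrite /slab_side eqxx addr0.
  rewrite /slab_side eqxx; case: ifP => // /eqP m0.
  by move: hm; rewrite -val_eqE /= m0 eqxx.
have side_i i : i != j -> \sum_(m < M) slab_side i m = 2 * C.
  move=> ij; rewrite /slab_side (negPf ij) sumr_const card_ord -mulr_natl.
  by rewrite /cell_width; field; rewrite pnatr_eq0 -lt0n.
rewrite side_j (eq_bigr _ side_i) /slab_height /cell_width -/L.
by field; rewrite pnatr_eq0 -lt0n.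
Qed.

End HyperplaneSlab.

(* A bounded subset of an affine hyperplane of R^d is Lebesgue-null: the slab
   boxes with M cells have total volume V / M, with V independent of M. *)
Lemma bounded_hyperplane_null (R : realType) (d : nat) (A : 'rV[R]_d -> Prop)
    (C al : R) (be : 'I_d -> R) (j : 'I_d) :
  0 < C -> be j != 0 ->
  (forall v, A v -> (forall i, `|v 0 i| <= C) /\ al + \sum_i v 0 i * be i = 0) ->
  lebesgue_null A.
Proof.
move=> C0 bj0 hA eps eps0.
pose V : R := 2 * ((\sum_i `|be i|) / `|be j|) * (2 * C) * \prod_(i | i != j) (2 * C).
have V0 : 0 <= V.
  have ratio0 : 0 <= (\sum_i `|be i|) / `|be j| by rewrite divr_ge0 ?sumr_ge0.
  have side0 : 0 <= 2 * C by lra.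
  apply: mulr_ge0; last exact: prodr_ge0.
  by apply: mulr_ge0 => //; apply: mulr_ge0.
pose M := (Num.Def.archi_bound (V / eps)).+1.
have M0 : (0 < M)%N by [].
have VM : V / eps < M%:R.
  apply: lt_le_trans (archi_boundP _) _; first by rewrite divr_ge0 // ltW.
  by rewrite ler_nat.
apply: (finite_box_cover j [ffun _ => Ordinal M0] (slab_lo_le_hi al be j C0 M0)).
  by move=> v /hA [bounded hv]; apply: slab_cover.
rewrite slab_volume // -/V ler_pdivrMr ?ltr0n //.
by move: VM; rewrite ltr_pdivrMr // mulrC => /ltW.
Qed.

Theorem theorem3p1 (R : realType) (k : nat) (X : finType)
    (psi phi : {set {set X}}) :
  (2 <= k)%N ->
  is_rooted_binary_tree psi ->
  is_rooted_binary_tree phi ->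
  phi != psi ->
  forall (d : nat) (c : tensor R X k) (e : 'I_d -> tensor R X k),
    injective (affine_map c e) ->
    (forall P : tensor R X k, UE psi P -> exists v, affine_map c e v = P) ->
    lebesgue_null (fun v : 'rV[R]_d =>
      UE psi (affine_map c e v) /\ UE phi (affine_map c e v)).
Proof.
move=> k2 hpsi hphi ne d c e inj onto; have k0 : (0 < k)%N by apply: ltnW.
have [D [Dpsi Dphi]] := distinguishing_cluster hpsi hphi ne.
have [x [y [z [xD zD yD xz cherry]]]] := distinguishing_triple hpsi hphi Dpsi Dphi.
have [s asym] := block_tensor_asym R k2 xD zD yD xz.
set Y := [set x; y; z] in cherry asym.
pose al := swap_defect c Y y z s; pose be i := swap_defect (e i) Y y z s.
have [_ _ _ compat _] := hpsi.
have [v0 hv0] := onto _ (block_tensor_UE R k0 compat Dpsi).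
have [v1 hv1] := onto _ (@uniform_tensor_UE R X k psi k0).
have g0 : al + \sum_i v0 0 i * be i != 0 by rewrite -swap_defect_affine hv0 subr_eq0.
have g1 : al + \sum_i v1 0 i * be i = 0.
  by rewrite -swap_defect_affine hv1 (swap_defect_UE _ (@uniform_tensor_UE R X k phi k0) cherry).
(* the defect is not constant, so some coefficient is nonzero *)
have [j bj] : exists j, be j != 0.
  case: (pickP (fun j => be j != 0)) => [j bj|flat]; first by exists j.
  have flat_sum v : \sum_i v 0 i * be i = 0.
    by apply: big1 => i _; rewrite (eqP (negbFE (flat i))) mulr0.
  by rewrite !flat_sum in g0 g1; rewrite g1 eqxx in g0.
have [C [C0 bounded]] := affine_preimage_bounded inj.
apply: (bounded_hyperplane_null (al := al) C0 bj) => v [UEpsi UEphi]; split.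
  by apply: bounded => t; apply: prob_tensor_le1; case: UEpsi.
by rewrite -swap_defect_affine (swap_defect_UE _ UEphi cherry).
Qed.
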